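(* Let $r$ be a normalized formal generalized $r$-matrix. Then $\mathfrak g(r)\cap z^{-1}\mathfrak g[\![z]\!]=\{(1\otimes\alpha)r(z,0)\mid\alpha\in\mathfrak g^*\}$, and this subspace generates $\mathfrak g(r)$ as a Lie algebra.
   Context: $\Bbbk$ is a field of characteristic $0$, $\mathfrak g$ a finite-dimensional semisimple Lie algebra over $\Bbbk$ of dimension $d$ with Killing form $\kappa$, $\{b_i\}$ a $\kappa$-orthonormal basis, $\gamma=\sum_i b_i\otimes b_i$, and $\frac{1}{x-y}=\sum_{k\ge0}x^{-k-1}y^k$. A series $r\in(\mathfrak g\otimes\mathfrak g)(\!(x)\!)[\![y]\!]$ is in normalized standard form if $r=\frac{\gamma}{x-y}+r_0$ with $r_0\in(\mathfrak g\otimes\mathfrak g)[\![x,y]\!]$; then $\bar r(x,y)=\frac{\gamma}{x-y}-\tau(r_0(y,x))$, $\tau$ the flip. With $s^{ij}$ meaning substitution $(x,y)=(x_i,x_j)$ and placement of tensor factors in positions $i,j$ inside $(U(\mathfrak g)^{\otimes 3})\otimes\Bbbk(\!(x_1)\!)(\!(x_2)\!)[\![x_3]\!]$, a normalized formal generalized $r$-matrix is such an $r$ with $[r^{12},r^{13}]+[r^{12},r^{23}]+[r^{13},\bar r^{23}]=0$. For $s=\sum_{k,i}s_{k,i}(x)\otimes b_iy^k$, $\mathfrak g(s)=\mathrm{span}_\Bbbk\{s_{k,i}(z)\}\subseteq\mathfrak g(\!(z)\!)$. Here $r(z,0)\in\mathfrak g(\!(z)\!)\otimes\mathfrak g$ is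 the $y^0$-coefficient and $(1\otimes\alpha)$ applies $\alpha$ to the second factor. *)

From HB Require Import structures.
From mathcomp Require Import all_boot all_order all_algebra.
Set Implicit Arguments. Unset Strict Implicit. Unset Printing Implicit Defensive.
Import GRing.Theory.
Local Open Scope ring_scope.

Section LieDefs.
Variables (K : fieldType) (g : vectType K).

Definition is_lie_bracket (br : g -> g -> g) : Prop :=
  [/\ forall a : g, linear (br a), forall c : g, linear (br^~ c),
      forall a : g, br a a = 0 &
      forall a c e : g, br a (br c e) + br c (br e a) + br e (br a c) = 0].

Definition killing (br : g -> g -> g) (x y : g) : K :=
  \sum_(i < \dim {: g}) coord (vbasis {: g}) i (br x (br y (tnth (vbasis {: g}) i))).

Definition lie_ideal (br : g -> g -> g) (I : {vspace g}) : Prop :=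
  forall x y : g, y \in I -> br x y \in I.

(* [I,I] = span of the brackets [u,v], u v in I; by bilinearity it is
   spanned by brackets of basis vectors of I. *)
Definition derived (br : g -> g -> g) (I : {vspace g}) : {vspace g} :=
  <<[seq br u v | u <- tval (vbasis I), v <- tval (vbasis I)]>>%VS.

Definition lie_solvable (br : g -> g -> g) (I : {vspace g}) : Prop :=
  exists n : nat, iter n (derived br) I = 0%VS.

Definition lie_semisimple (br : g -> g -> g) : Prop :=
  forall I : {vspace g}, lie_ideal br I -> lie_solvable br I -> I = 0%VS.

(* bracket of two Laurent series f, h vanishing below N resp. M:
   [f,h]_n = sum_{m} [f_m, h_{n-m}] with m ranging over N .. n-M *)
Definition lbr (br : g -> g -> g) (N M : int) (f h : int -> g) : int -> g :=
  fun n => \sum_(i < (absz (n - N - M)%R).+1) br (f (N + i%:Z)) (h (n - N - i%:Z)).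

Inductive lie_gen (br : g -> g -> g) (S : (int -> g) -> Prop) : (int -> g) -> Prop :=
| lg_base f : S f -> lie_gen br S f
| lg_zero : lie_gen br S (fun _ => 0)
| lg_add f h : lie_gen br S f -> lie_gen br S h -> lie_gen br S (fun n => f n + h n)
| lg_scale (a : K) f : lie_gen br S f -> lie_gen br S (fun n => a *: f n)
| lg_br (N M : int) f h : lie_gen br S f -> lie_gen br S h ->
    (forall n, n < N -> f n = 0) -> (forall n, n < M -> h n = 0) ->
    lie_gen br S (lbr br N M f h).

Variables (d : nat) (b : d.-tuple g).

(* A series r = gamma/(x-y) + r0 in normalized standard form is given by
   r0 in (g (x) g)[[x,y]], encoded as r0 p q i : g, meaning
   r0 = sum_{p,q,i} (r0 p q i) (x) b_i x^p y^q.
   rcoef r0 k i n = coefficient of x^n in r_{k,i}(x), where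
   r = sum_{k,i} r_{k,i}(x) (x) b_i y^k. *)
Definition rcoef (r0 : nat -> nat -> 'I_d -> g) (k : nat) (i : 'I_d) (n : int) : g :=
  (if n == - (k%:Z + 1) then tnth b i else 0) +
  (if n is Posz p then r0 p k i else 0).

(* coefficient of x^p y^q of rbar(x,y) = gamma/(x-y) - tau(r0(y,x)),
   written as sum_j (barcoef p q j) (x) b_j *)
Definition barcoef (r0 : nat -> nat -> 'I_d -> g) (p : int) (q : nat) (j : 'I_d) : g :=
  (if p == - (q%:Z + 1) then tnth b j else 0) -
  (if p is Posz p' then \sum_(i < d) coord b j (r0 q p' i) *: tnth b i else 0).

(* Coefficients of x1^a x2^bb x3^c of the three terms of the generalized CYBE,
   each an element of g (x) g (x) g written as sum_{m,n} T m n (x) b_m (x) b_n. *)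
Definition cybe1 br r0 (a bb : int) (c : nat) (m n : 'I_d) : g :=
  if bb is Posz bn then
    \sum_(i < (absz (a + bn%:Z + c%:Z + 2)%R).+1)
       br (rcoef r0 bn m (- (bn%:Z + 1) + i%:Z)) (rcoef r0 c n (a + bn%:Z + 1 - i%:Z))
  else 0.

Definition cybe2 br r0 (a bb : int) (c : nat) (m n : 'I_d) : g :=
  \sum_(i < (absz (bb + c%:Z + 1)%R).+1) \sum_(j < d)
     coord b m (br (tnth b j) (rcoef r0 c n (bb - i%:Z))) *: rcoef r0 i j a.

Definition cybe3 br r0 (a bb : int) (c : nat) (m n : 'I_d) : g :=
  \sum_(i < c.+1) \sum_(l < d) \sum_(j < d)
     (coord b m (barcoef r0 bb (c - i) j) * coord b n (br (tnth b l) (tnth b j)))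
       *: rcoef r0 i l a.

Definition normalized_gen_rmatrix (br : g -> g -> g) (r0 : nat -> nat -> 'I_d -> g) : Prop :=
  forall (a bb : int) (c : nat) (m n : 'I_d),
    cybe1 br r0 a bb c m n + cybe2 br r0 a bb c m n + cybe3 br r0 a bb c m n = 0.

Definition in_gr (r0 : nat -> nat -> 'I_d -> g) (f : int -> g) : Prop :=
  exists (N : nat) (cf : nat -> 'I_d -> K),
    f = (fun z => \sum_(k < N) \sum_(i < d) cf k i *: rcoef r0 k i z).

End LieDefs.

From HB Require Import structures.
From mathcomp Require Import all_boot all_order all_algebra zify.
From Stdlib Require Import FunctionalExtensionality.
Set Implicit Arguments. Unset Strict Implicit. Unset Printing Implicit Defensive.
Import Order.TTheory GRing.Theory Num.Theory.
Local Open Scope ring_scope.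

(* Lemma 1.11.  Write the normalized r-matrix as r = sum_{k,i} r_{k,i}(x) (x) b_i y^k,
   so that r_{k,i}(z) = b_i z^(-k-1) + (power series), and g(r) = span{r_{k,i}}.

   Part 1.  The z^(-k-1)-coefficient of sum c_{k,i} r_{k,i} is sum_i c_{k,i} b_i
   (only r_{k,*} has a pole of that order), so by freeness of the basis an element
   of g(r) lying in z^(-1) g[[z]] involves only k = 0; it is then
   sum_i alpha(b_i) r_{0,i} = (1 (x) alpha) r(z,0) for a functional alpha.

   Part 2.  Comparing coefficients of the generalized CYBE gives
   (a) [r_{k,i}, r_{l,j}] lies in g(r), so g(r) is a Lie subalgebra of g((z)), and
   (b) sum_j c^m_{jn} r_{c+1,j}, with c^m_{jn} the structure constants of g, lies
       in the Lie algebra generated by r_{0,*}, ..., r_{c,*}.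
   As g is semisimple its centre is trivial, hence the vectors (c^m_{jn})_j span
   K^d and every r_{c+1,j} is a combination of the expressions in (b).  Induction
   on c shows that g(r) is generated by g(r) /\ z^(-1) g[[z]]. *)

Lemma sum_closed (T : Type) (V : nmodType) (P : (T -> V) -> Prop) :
  P (fun _ => 0) -> (forall f h, P f -> P h -> P (fun z => f z + h z)) ->
  forall I (s : seq I) (F : I -> T -> V), (forall i, P (F i)) ->
  P (fun z => \sum_(i <- s) F i z).
Proof.
move=> P0 PD I s F PF; elim: s => [|i s IH].
  by under [X in P X]functional_extensionality do rewrite big_nil.
by under [X in P X]functional_extensionality do rewrite big_cons; apply: PD.
Qed.

Lemma int_sub_nat (x y : int) : x <= y -> exists p : nat, x = y - p%:Z.
Proof.
move=> h; exists (absz (y - x)); rewrite abszE ger0_norm ?subr_ge0 //; lia.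
Qed.

Section LieBracket.
Variables (K : fieldType) (g : vectType K) (br : g -> g -> g).
Hypothesis hlie : is_lie_bracket br.

Lemma brDr a u v : br a (u + v) = br a u + br a v.
Proof. by case: hlie => h _ _ _; have := h a 1 u v; rewrite !scale1r. Qed.

Lemma br0r a : br a 0 = 0.
Proof. by apply: (@addrI _ (br a 0)); rewrite -brDr !addr0. Qed.

Lemma brZr a k u : br a (k *: u) = k *: br a u.
Proof. by case: hlie => h _ _ _; have := h a k u 0; rewrite !addr0 br0r addr0. Qed.

Lemma brDl a u v : br (u + v) a = br u a + br v a.
Proof. by case: hlie => _ h _ _; have := h a 1 u v; rewrite !scale1r. Qed.

Lemma br0l a : br 0 a = 0.
Proof. by apply: (@addrI _ (br 0 a)); rewrite -brDl !addr0. Qed.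

Lemma brZl a k u : br (k *: u) a = k *: br u a.
Proof. by case: hlie => _ h _ _; have := h a k u 0; rewrite !addr0 br0l addr0. Qed.

Lemma br_suml I (r : seq I) P (F : I -> g) a :
  br (\sum_(i <- r | P i) F i) a = \sum_(i <- r | P i) br (F i) a.
Proof. exact: (big_morph (br^~ a) (fun u v => brDl a u v) (br0l a)). Qed.

Lemma br_sumr I (r : seq I) P (F : I -> g) a :
  br a (\sum_(i <- r | P i) F i) = \sum_(i <- r | P i) br a (F i).
Proof. exact: (big_morph (br a) (fun u v => brDr a u v) (br0r a)). Qed.

Lemma br_anti a u : br a u = - br u a.
Proof.
case: hlie => _ _ h _; apply/eqP; rewrite -addr_eq0.
by have := h (a + u); rewrite brDl !brDr !h add0r addr0 => ->.
Qed.

End LieBracket.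

Section TrivialCentre.
Variables (K : fieldType) (g : vectType K) (br : g -> g -> g).
Hypotheses (hlie : is_lie_bracket br) (hss : lie_semisimple br).
Variables (d : nat) (b : d.-tuple g).
Hypothesis hb : basis_of fullv b.

(* A central element spans an abelian (hence solvable) ideal, which must vanish. *)
Lemma centre_trivial x : (forall y, br x y = 0) -> x = 0.
Proof.
move=> hx.
have hx' y : br y x = 0 by rewrite (br_anti hlie) hx oppr0.
have line0 : <[x]>%VS = 0%VS.
  apply: hss.
    by move=> y z /vlineP[k ->]; rewrite (brZr hlie) hx' scaler0 mem0v.
  exists 1%N; rewrite /= /derived; apply/eqP; rewrite -subv0.
  apply/span_subvP => w /allpairsP[[u v] /= [hu hv ->]].
  have /vlineP[k ->] := vbasis_mem hu.
  by rewrite (brZl hlie) hx scaler0 memv0.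
by apply/eqP; rewrite -memv0 -line0 memv_line.
Qed.

Lemma coord_expand v : v = \sum_(i < d) coord b i v *: tnth b i.
Proof.
rewrite {1}(coord_basis hb (memvf v)); apply: eq_bigr => i _; by rewrite (tnth_nth 0).
Qed.

(* The structure-constant vectors j |-> c^m_{jn} = coord_m [b_j, b_n], indexed
   by the pairs (m, n), span K^d: a vector u orthogonal to all of them gives
   an element x = sum_j u_j b_j with [x, b_n] = 0 for all n, i.e. a central
   element. *)
Lemma structure_constants_span j0 : exists lam : 'I_d * 'I_d -> K, forall j : 'I_d,
  \sum_p lam p * coord b p.1 (br (tnth b j) (tnth b p.2)) = (j == j0)%:R.
Proof.
pose A : 'M[K]_(d, #|{: 'I_d * 'I_d}|) :=
  \matrix_(j, p) coord b (enum_val p).1 (br (tnth b j) (tnth b (enum_val p).2)).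
have : row_free A.
  rewrite -kermx_eq0; apply/rowV0P => u /sub_kermxP hu.
  pose x := \sum_(j < d) u 0 j *: tnth b j.
  have coord_brx m n : coord b m (br x (tnth b n)) = 0.
    move/matrixP: hu => /(_ 0 (enum_rank (m, n))).
    rewrite !mxE /x (br_suml hlie) linear_sum /= => H; apply: etrans H.
    by apply: eq_bigr => j _; rewrite (brZl hlie) linearZ /= !mxE enum_rankK.
  have x_central : x = 0.
    apply: centre_trivial => y; rewrite (coord_expand y) (br_sumr hlie).
    apply: big1 => i _; rewrite (brZr hlie) (coord_expand (br x _)).
    by rewrite big1 ?scaler0 // => m _; rewrite coord_brx scale0r.
  apply/rowP => j; rewrite mxE.
  move/freeP: (basis_free hb) => /(_ (fun j => u 0 j)) -> //.
  rewrite -[RHS]x_central /x; apply: eq_bigr => i _; by rewrite (tnth_nth 0).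
case/row_freeP => B /matrixP hB.
exists (fun p => B (enum_rank p) j0) => j.
have := hB j j0; rewrite !mxE => <-.
rewrite (reindex (@enum_val _ {: 'I_d * 'I_d})) /=; last exact/onW_bij/enum_val_bij.
by apply: eq_bigr => p _; rewrite mxE enum_valK mulrC.
Qed.

End TrivialCentre.

Section SpanOfR.
Variables (K : fieldType) (g : vectType K) (d : nat) (b : d.-tuple g)
  (r0 : nat -> nat -> 'I_d -> g).

Local Notation R := (rcoef b r0).
Local Notation IG := (in_gr b r0).

Lemma rcoef_below k i n : n < - (k%:Z + 1) -> R k i n = 0.
Proof.
move=> h; rewrite /rcoef (lt_eqF h) add0r.
case: n h => // p h; exfalso; move: h; lia.
Qed.

Lemma rcoef_pole k k' i : R k i (- (k'%:Z + 1)) = if k == k' then tnth b i else 0.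
Proof.
rewrite /rcoef.
have -> : (- (k'%:Z + 1) == - (k%:Z + 1)) = (k == k') by apply/eqP/eqP; lia.
by rewrite -PoszD addn1 addr0.
Qed.

Lemma in_gr0 : IG (fun _ => 0).
Proof.
exists 0%N, (fun _ _ => 0); apply: functional_extensionality => z; by rewrite big_ord0.
Qed.

Lemma in_grZ (a : K) f : IG f -> IG (fun z => a *: f z).
Proof.
case=> N [cf ->]; exists N, (fun k i => a * cf k i); apply: functional_extensionality => z.
rewrite scaler_sumr; apply: eq_bigr => k _; rewrite scaler_sumr; apply: eq_bigr => i _.
by rewrite scalerA.
Qed.

Lemma widen_combination N N' (cf : nat -> 'I_d -> K) z : (N <= N')%N ->
  \sum_(k < N) \sum_(i < d) cf k i *: R k i z =
  \sum_(k < N') \sum_(i < d) (if (k < N)%N then cf k i else 0) *: R k i z.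
Proof.
move=> h; rewrite (big_ord_widen N' (fun k => \sum_(i < d) cf k i *: R k i z) h).
rewrite big_mkcond; apply: eq_bigr => k _; case: ifP => // _.
by symmetry; apply: big1 => i _; rewrite scale0r.
Qed.

Lemma in_grD f h : IG f -> IG h -> IG (fun z => f z + h z).
Proof.
case=> N1 [c1 ->]; case=> N2 [c2 ->].
exists (maxn N1 N2), (fun k i =>
  (if (k < N1)%N then c1 k i else 0) + (if (k < N2)%N then c2 k i else 0)).
apply: functional_extensionality => z.
rewrite (widen_combination _ _ (leq_maxl N1 N2)) (widen_combination _ _ (leq_maxr N1 N2)).
rewrite -big_split; apply: eq_bigr => k _; rewrite -big_split; apply: eq_bigr => i _.
by rewrite scalerDl.
Qed.

Lemma in_gr_sum A (F : 'I_A -> int -> g) : (forall k, IG (F k)) -> IG (fun z => \sum_(k < A) F k z).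
Proof. exact: (sum_closed in_gr0 in_grD). Qed.

Lemma in_gr_R k i : IG (R k i).
Proof.
exists k.+1, (fun k' j => ((k' == k) && (j == i))%:R); apply: functional_extensionality => z.
rewrite big_ord_recr /= big1 ?add0r.
  rewrite (bigD1 i) //= big1 ?addr0 ?eqxx ?scale1r //.
  by move=> j /negbTE ->; rewrite scale0r.
move=> k' _; apply: big1 => j _.
by rewrite (ltn_eqF (ltn_ord k')) scale0r.
Qed.

Lemma combination_at_pole N (cf : nat -> 'I_d -> K) (k : 'I_N) :
  \sum_(k' < N) \sum_(i < d) cf k' i *: R k' i (- (k%:Z + 1)) =
  \sum_(i < d) cf k i *: tnth b i.
Proof.
rewrite (bigD1 k) //= [X in _ + X]big1 ?addr0; last first.
  move=> k' hk'; apply: big1 => j _; rewrite rcoef_pole.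
  by case: eqP => [/val_inj e|]; [rewrite e eqxx in hk' | rewrite scaler0].
by apply: eq_bigr => i _; rewrite rcoef_pole eqxx.
Qed.

Hypothesis hb : basis_of fullv b.

Lemma regular_element_of_span f : IG f -> (forall n, n < -1 -> f n = 0) ->
  exists c : 'I_d -> K, f = fun n => \sum_(i < d) c i *: R 0 i n.
Proof.
case=> N [cf ->] hreg.
have higher_zero k i : (0 < k < N)%N -> cf k i = 0.
  case/andP=> k0 kN; have := hreg (- (k%:Z + 1)) ltac:(lia).
  rewrite (combination_at_pole cf (Ordinal kN)) => comb0.
  move/freeP: (basis_free hb) => /(_ _ _ i) -> //.
  by rewrite -[RHS]comb0; apply: eq_bigr => j _; rewrite (tnth_nth 0).
exists (fun i => if (0 < N)%N then cf 0%N i else 0).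
apply: functional_extensionality => n; clear hreg.
case: N cf higher_zero => [|N] cf higher_zero.
  by rewrite big_ord0; symmetry; apply: big1 => i _; rewrite scale0r.
rewrite big_ord_recl [X in _ + X]big1 ?addr0 // => k _; apply: big1 => j _.
by rewrite higher_zero ?scale0r //= /bump /= ltnS ltn_ord.
Qed.

Definition dual_of_coords (c : 'I_d -> K) (x : g) : K^o := \sum_(i < d) c i * coord b i x.

Lemma dual_of_coords_linear c : linear (dual_of_coords c).
Proof.
move=> k u v; rewrite /dual_of_coords scaler_sumr -big_split /=; apply: eq_bigr => i _.
by rewrite linearP /= mulrDr mulrCA.
Qed.

HB.instance Definition _ c :=
  GRing.isLinear.Build K g K^o *:%R (dual_of_coords c) (dual_of_coords_linear c).

Lemma dual_of_coords_basis c j : dual_of_coords c (tnth b j) = c j.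
Proof.
rewrite /dual_of_coords (bigD1 j) //= big1 ?addr0.
  by rewrite (tnth_nth 0) coord_free ?eqxx ?mulr1 // (basis_free hb).
by move=> i hi; rewrite (tnth_nth 0) coord_free ?(basis_free hb) // eq_sym (negbTE hi) mulr0.
Qed.

Lemma regular_part_of_span f : (IG f /\ (forall n : int, n < - 1 -> f n = 0)) <->
  (exists alpha : {linear g -> K^o},
     f = (fun n => \sum_(i < d) alpha (tnth b i) *: R 0 i n)).
Proof.
split.
  case=> f_gr f_reg; have [c ->] := regular_element_of_span f_gr f_reg.
  exists (dual_of_coords c : {linear g -> K^o}); apply: functional_extensionality => n.
  by apply: eq_bigr => i _; rewrite /= dual_of_coords_basis.
case=> alpha ->; split.
  exists 1%N, (fun _ i => alpha (tnth b i)); apply: functional_extensionality => n.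
  by rewrite big_ord1.
by move=> n hn; apply: big1 => i _; rewrite rcoef_below ?scaler0.
Qed.

End SpanOfR.

Section TruncatedBracket.
Variables (K : fieldType) (g : vectType K) (br : g -> g -> g).
Hypothesis hlie : is_lie_bracket br.

Definition vanishes_below (f : int -> g) (N : int) : Prop := forall n, n < N -> f n = 0.

Lemma vanishes_below_le f N N' : N' <= N -> vanishes_below f N -> vanishes_below f N'.
Proof. by move=> h hf n hn; apply: hf; lia. Qed.

(* Lowering
   N (resp. M) by one only adds a vanishing term at the start (resp. end). *)
Lemma lbr_lowerN N M f h : vanishes_below f N -> vanishes_below h M ->
  lbr br N M f h = lbr br (N - 1) M f h.
Proof.
move=> hf hh; apply: functional_extensionality => n; rewrite /lbr.
have -> : n - (N - 1) - M = (n - N - M) + 1 by lia.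
case: (ltP (n - N - M) 0) => hL.
  rewrite big1; last by move=> i _; rewrite hh ?(br0r hlie) //; lia.
  symmetry; apply: big1 => -[[|i] hi] _ /=.
    by rewrite hf ?(br0l hlie) //; lia.
  by rewrite hh ?(br0r hlie) //; lia.
have [l El] : exists l : nat, n - N - M = l%:Z.
  by exists (absz (n - N - M)%R); rewrite abszE ger0_norm.
rewrite El -PoszD addn1 /=.
rewrite [RHS]big_ord_recl /= hf ?(br0l hlie) ?add0r; last by lia.
apply: eq_bigr => i _; rewrite /bump /=; congr (br (f _) (h _)); lia.
Qed.

Lemma lbr_lowerM N M f h : vanishes_below f N -> vanishes_below h M ->
  lbr br N M f h = lbr br N (M - 1) f h.
Proof.
move=> hf hh; apply: functional_extensionality => n; rewrite /lbr.
have -> : n - N - (M - 1) = (n - N - M) + 1 by lia.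
case: (ltP (n - N - M) 0) => hL.
  rewrite big1; last by move=> i _; rewrite hh ?(br0r hlie) //; lia.
  by symmetry; apply: big1 => i _; rewrite hh ?(br0r hlie) //; lia.
have [l El] : exists l : nat, n - N - M = l%:Z.
  by exists (absz (n - N - M)%R); rewrite abszE ger0_norm.
rewrite El -PoszD addn1 /=.
rewrite [RHS]big_ord_recr /= hh ?(br0r hlie) ?addr0 //; lia.
Qed.

Lemma lbr_bounds N M N' M' f h : N' <= N -> M' <= M ->
  vanishes_below f N -> vanishes_below h M -> lbr br N M f h = lbr br N' M' f h.
Proof.
move=> /int_sub_nat [p ->] /int_sub_nat [q ->] hf hh.
have lowerN p' N0 : vanishes_below f N0 -> lbr br N0 M f h = lbr br (N0 - p'%:Z) M f h.
  elim: p' N0 => [|p' IH] N0 hf0; first by rewrite subr0.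
  rewrite IH // lbr_lowerN //; last by apply: vanishes_below_le hf0; lia.
  by have -> : N0 - (p'.+1)%:Z = N0 - p'%:Z - 1 by lia.
have lowerM q' M0 N0 : vanishes_below f N0 -> vanishes_below h M0 ->
    lbr br N0 M0 f h = lbr br N0 (M0 - q'%:Z) f h.
  elim: q' M0 => [|q' IH] M0 hf0 hh0; first by rewrite subr0.
  rewrite IH // lbr_lowerM //; last by apply: vanishes_below_le hh0; lia.
  by have -> : M0 - (q'.+1)%:Z = M0 - q'%:Z - 1 by lia.
rewrite (lowerN p) // (lowerM q) //; apply: vanishes_below_le hf; lia.
Qed.

Lemma lbr_suml N M A (F : 'I_A -> int -> g) h n :
  lbr br N M (fun z => \sum_(k < A) F k z) h n = \sum_(k < A) lbr br N M (F k) h n.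
Proof. rewrite /lbr exchange_big; apply: eq_bigr => i _; exact: br_suml. Qed.

Lemma lbr_sumr N M A (F : 'I_A -> int -> g) f n :
  lbr br N M f (fun z => \sum_(k < A) F k z) n = \sum_(k < A) lbr br N M f (F k) n.
Proof. rewrite /lbr exchange_big; apply: eq_bigr => i _; exact: br_sumr. Qed.

Lemma lbr_scalel N M (a : K) f h n :
  lbr br N M (fun z => a *: f z) h n = a *: lbr br N M f h n.
Proof. rewrite /lbr scaler_sumr; apply: eq_bigr => i _; exact: brZl. Qed.

Lemma lbr_scaler N M (a : K) f h n :
  lbr br N M f (fun z => a *: h z) n = a *: lbr br N M f h n.
Proof. rewrite /lbr scaler_sumr; apply: eq_bigr => i _; exact: brZr. Qed.

End TruncatedBracket.

Section CYBEConsequences.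
Variables (K : fieldType) (g : vectType K) (br : g -> g -> g).
Hypothesis hlie : is_lie_bracket br.
Variables (d : nat) (b : d.-tuple g) (r0 : nat -> nat -> 'I_d -> g).
Hypothesis hr : normalized_gen_rmatrix b br r0.

Local Notation R := (rcoef b r0).
Local Notation IG := (in_gr b r0).

Lemma vanishes_below_R k i : vanishes_below (R k i) (- (k%:Z + 1)).
Proof. by move=> n; apply: rcoef_below. Qed.

Lemma lbr_R_cybe1 k l i j :
  lbr br (- (k%:Z + 1)) (- (l%:Z + 1)) (R k i) (R l j) = (fun a => cybe1 b br r0 a k%:Z l i j).
Proof.
apply: functional_extensionality => a; rewrite /cybe1 /lbr.
have -> : a - - (k%:Z + 1) - - (l%:Z + 1) = a + k%:Z + l%:Z + 2 by lia.
by apply: eq_bigr => t _; congr (br (R k i _) (R l j _)); lia.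
Qed.

Lemma in_gr_cybe2 bb c m n : IG (fun a => cybe2 b br r0 a bb c m n).
Proof.
by exists (absz (bb + c%:Z + 1)%R).+1,
  (fun k j => coord b m (br (tnth b j) (R c n (bb - k%:Z)))).
Qed.

Lemma in_gr_cybe3 bb c m n : IG (fun a => cybe3 b br r0 a bb c m n).
Proof.
exists c.+1, (fun i l => \sum_(j < d)
  (coord b m (barcoef b r0 bb (c - i) j) * coord b n (br (tnth b l) (tnth b j)))).
apply: functional_extensionality => a; rewrite /cybe3; apply: eq_bigr => i _.
by apply: eq_bigr => l _; rewrite scaler_suml.
Qed.

(* (a) for generators: [r_{k,i}, r_{l,j}] = -(cybe2 + cybe3) lies in g(r). *)
Lemma in_gr_bracket_R k l i j : IG (lbr br (- (k%:Z + 1)) (- (l%:Z + 1)) (R k i) (R l j)).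
Proof.
rewrite lbr_R_cybe1.
have -> : (fun a => cybe1 b br r0 a k l i j) =
    (fun a => (-1 : K) *: (cybe2 b br r0 a k l i j + cybe3 b br r0 a k l i j)).
  apply: functional_extensionality => a; have := hr a k l i j.
  by rewrite scaleN1r -addrA => /eqP; rewrite addr_eq0 => /eqP.
by apply/in_grZ/in_grD; [exact: in_gr_cybe2 | exact: in_gr_cybe3].
Qed.

Lemma in_gr_lbr N M f h : IG f -> IG h -> vanishes_below f N -> vanishes_below h M ->
  IG (lbr br N M f h).
Proof.
move=> [A [cf Ef]] [B [ch Eh]] hf hh.
pose N' := Num.min N (- A%:Z); pose M' := Num.min M (- B%:Z).
rewrite (lbr_bounds hlie (N' := N') (M' := M')) ?ge_min ?lexx // Ef Eh.
have -> : lbr br N' M' (fun z => \sum_(k < A) \sum_(i < d) cf k i *: R k i z)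
                       (fun z => \sum_(k < B) \sum_(i < d) ch k i *: R k i z) =
  fun n => \sum_(k < A) \sum_(i < d) cf k i *: \sum_(l < B) \sum_(j < d)
            ch l j *: lbr br N' M' (R k i) (R l j) n.
  apply: functional_extensionality => n.
  rewrite (lbr_suml hlie); apply: eq_bigr => k _; rewrite (lbr_suml hlie); apply: eq_bigr => i _.
  rewrite (lbr_scalel hlie); congr (_ *: _).
  rewrite (lbr_sumr hlie); apply: eq_bigr => l _; rewrite (lbr_sumr hlie); apply: eq_bigr => j _.
  exact: (lbr_scaler hlie).
apply: in_gr_sum => k; apply: in_gr_sum => i; apply: in_grZ.
apply: in_gr_sum => l; apply: in_gr_sum => j; apply: in_grZ.
rewrite -(lbr_bounds hlie (N := - ((k : nat)%:Z + 1)) (M := - ((l : nat)%:Z + 1))).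
- exact: in_gr_bracket_R.
- by rewrite ge_min; apply/orP; right; have := ltn_ord k; lia.
- by rewrite ge_min; apply/orP; right; have := ltn_ord l; lia.
- exact: vanishes_below_R.
- exact: vanishes_below_R.
Qed.

Definition lower_terms (c : nat) (m n : 'I_d) (a : int) : g :=
  \sum_(i < c.+1) \sum_(j < d)
     coord b m (br (tnth b j) (R c n (0%:Z - (i : nat)%:Z))) *: R i j a.

(* (b): the CYBE coefficient at x2-degree 0 expresses
   sum_j c^m_{jn} r_{c+1,j} through the bracket [r_{0,m}, r_{c,n}] and the
   r_{i,*} with i <= c. *)
Lemma cybe_recursion c m n a :
  \sum_(j < d) coord b m (br (tnth b j) (tnth b n)) *: R c.+1 j a =
  - (cybe1 b br r0 a 0%:Z c m n + lower_terms c m n a + cybe3 b br r0 a 0%:Z c m n).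
Proof.
have split2 : cybe2 b br r0 a 0%:Z c m n = lower_terms c m n a +
    \sum_(j < d) coord b m (br (tnth b j) (tnth b n)) *: R c.+1 j a.
  rewrite /cybe2 (_ : absz (0%:Z + c%:Z + 1)%R = c.+1); last by rewrite add0r -PoszD addn1.
  rewrite big_ord_recr /=; congr (_ + _); apply: eq_bigr => j _.
  by rewrite (_ : 0%:Z - (c.+1)%:Z = - (c%:Z + 1)) ?rcoef_pole ?eqxx //; lia.
apply/eqP; rewrite -addr_eq0; apply/eqP.
rewrite -[RHS](hr a 0%:Z c m n) split2 addrC -!addrA.
by congr (_ + (_ + _)); rewrite addrC.
Qed.

End CYBEConsequences.

Section Generation.
Variables (K : fieldType) (g : vectType K) (br : g -> g -> g).
Hypotheses (hlie : is_lie_bracket br) (hss : lie_semisimple br).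
Variables (d : nat) (b : d.-tuple g).
Hypothesis hb : basis_of fullv b.
Variable r0 : nat -> nat -> 'I_d -> g.
Hypothesis hr : normalized_gen_rmatrix b br r0.

Local Notation R := (rcoef b r0).
Local Notation IG := (in_gr b r0).
Local Notation LG := (lie_gen br (fun h => IG h /\ (forall n : int, n < - 1 -> h n = 0))).

Lemma LG_sum I (s : seq I) (F : I -> int -> g) :
  (forall i, LG (F i)) -> LG (fun z => \sum_(i <- s) F i z).
Proof. exact: (sum_closed (lg_zero _ _) (@lg_add _ _ _ _)). Qed.

Lemma LG_R0 i : LG (R 0 i).
Proof.
apply: lg_base; split; first exact: in_gr_R.
by move=> n; exact: (@rcoef_below _ _ _ b r0 0%N i n).
Qed.

Lemma LG_structure_combination c : (forall k, (k <= c)%N -> forall i, LG (R k i)) ->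
  forall m n, LG (fun a => \sum_(j < d) coord b m (br (tnth b j) (tnth b n)) *: R c.+1 j a).
Proof.
move=> IH m n.
have LG_low (k : 'I_c.+1) i : LG (R k i) by apply: IH; rewrite -ltnS.
rewrite (functional_extensionality _ _ (cybe_recursion hr c m n)).
rewrite (_ : (fun a => - _) = fun a => (-1 : K) *:
  ((cybe1 b br r0 a 0%:Z c m n + lower_terms br b r0 c m n a) + cybe3 b br r0 a 0%:Z c m n));
  last by apply: functional_extensionality => a; rewrite scaleN1r.
apply/lg_scale/lg_add; first apply: lg_add.
- rewrite -(lbr_R_cybe1 br b r0 0 c m n).
  by apply: lg_br; [exact: LG_R0 | exact: IH | exact: vanishes_below_R ..].
- by apply: LG_sum => i; apply: LG_sum => j; apply/lg_scale/LG_low.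
- by apply: LG_sum => i; do 2!apply: LG_sum => ?; apply/lg_scale/LG_low.
Qed.

(* Every r_{k,i} lies in the generated Lie algebra, by strong induction on k:
   r_{c+1,i} is a combination of the expressions of LG_structure_combination,
   since e_i is a combination of structure-constant vectors. *)
Lemma LG_R k i : LG (R k i).
Proof.
elim: k {-2}k (leqnn k) i => [|c IH] k hk i.
  by rewrite leqn0 in hk; move/eqP: hk ->; exact: LG_R0.
case: (leqP k c) => hkc; first exact: IH.
have -> : k = c.+1 by lia.
have [lam hlam] := structure_constants_span hlie hss hb i.
have -> : R c.+1 i = fun a => \sum_p lam p *:
    (\sum_(j < d) coord b p.1 (br (tnth b j) (tnth b p.2)) *: R c.+1 j a).
  apply: functional_extensionality => a.
  under eq_bigr do rewrite scaler_sumr.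
  rewrite exchange_big /=.
  under eq_bigr do (under eq_bigr do rewrite scalerA; rewrite -scaler_suml hlam).
  rewrite (bigD1 i) //= big1 ?addr0 ?eqxx ?scale1r //.
  by move=> j /negbTE ->; rewrite scale0r.
by apply: LG_sum => -[m n]; apply/lg_scale/LG_structure_combination.
Qed.

Lemma span_is_generated f : IG f <-> LG f.
Proof.
split.
  case=> N [cf ->].
  by apply: LG_sum => k; apply: LG_sum => i; apply/lg_scale/LG_R.
elim=> {f} [f [] | | f h _ hf _ hh | a f _ hf | N M f h _ hf _ hh vf vh].
- by [].
- exact: in_gr0.
- exact: in_grD.
- exact: in_grZ.
- exact: (in_gr_lbr hlie hr hf hh vf vh).
Qed.

End Generation.

Unset Implicit Arguments.

Theorem lemma1p11 (K : fieldType) (hchar : [pchar K] =i pred0)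
  (g : vectType K) (br : g -> g -> g) (hlie : is_lie_bracket br)
  (hss : lie_semisimple br)
  (d : nat) (b : d.-tuple g) (hb : basis_of fullv b)
  (horth : forall i j : 'I_d, killing br (tnth b i) (tnth b j) = (i == j)%:R)
  (r0 : nat -> nat -> 'I_d -> g)
  (hr : normalized_gen_rmatrix b br r0) :
  (forall f : int -> g,
     (in_gr b r0 f /\ (forall n : int, n < - 1 -> f n = 0)) <->
     (exists alpha : {linear g -> K^o},
        f = (fun n => \sum_(i < d) alpha (tnth b i) *: rcoef b r0 0 i n)))
  /\
  (forall f : int -> g,
     in_gr b r0 f <->
     lie_gen br (fun h => in_gr b r0 h /\ (forall n : int, n < - 1 -> h n = 0)) f).
Proof.
split=> f; first exact: (regular_part_of_span r0 hb).
exact: (span_is_generated hlie hss hb hr).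
Qed.
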